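(* Let $k$ be a field of characteristic not $2$, $\lambda\in k^\times$, $(V,\circ)$ a commutative associative algebra over $k$ with unit $e$, $\Theta:V\times V\to k$ an antisymmetric bilinear form, and $A_\Theta$ the algebra generated by $V$ with relations $vw-wv=\lambda\Theta(v,w)$ for $v,w\in V$ (so $A_\Theta=k[x^1,\dots,x^n]$ when $\Theta=0$). If $B:V\times V\to A_\Theta$ is bilinear and satisfies $B(v\circ w,z)+B(v,w\circ z)=\lambda^{-1}[B(v,z),w]$ for all $v,w,z\in V$, then $B=0$. Consequently the associated calculus $[\mathrm dv,w]=\lambda\,\mathrm d(v\circ w)$ admits no nonzero bimodule inner product of the form $(\mathrm dv,\mathrm dw)=B(v,w)$.
   Context: Here $[a,w]=aw-wa$ in $A_\Theta$. A bimodule inner product on $\Omega^1$ is a bimodule map $(\ ,\ ):\Omega^1\otimes_A\Omega^1\to A_\Theta$; for inner products of the form $(\mathrm dv,\mathrm dw)=B(v,w)$ the bimodule property is equivalent to the displayed identity. $A_\Theta$ is filtered by polynomial degree in elements of $V$. *)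

From HB Require Import structures.
From mathcomp Require Import all_boot all_order all_algebra.
Set Implicit Arguments. Unset Strict Implicit. Unset Printing Implicit Defensive.
Import Order.TTheory GRing.Theory Num.Theory.
Local Open Scope ring_scope.

Definition comm_br (A : nzRingType) (a b : A) : A := a * b - b * a.

Definition bilinear_map (k : fieldType) (V W : lmodType k) (f : V -> V -> W) :=
  (forall (a : k) (u v w : V), f (a *: u + v) w = a *: f u w + f v w) /\
  (forall (a : k) (u v w : V), f u (a *: v + w) = a *: f u v + f u w).

Definition antisym_form (k : fieldType) (V : lmodType k) (Th : V -> V -> k) :=
  (forall (a : k) (u v w : V), Th (a *: u + v) w = a * Th u w + Th v w) /\
  (forall (a : k) (u v w : V), Th u (a *: v + w) = a * Th u v + Th u w) /\
  (forall u v : V, Th u v = - Th v u).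

Definition theta_rel (k : fieldType) (V : lmodType k) (lam : k)
    (Th : V -> V -> k) (C : algType k) (f : V -> C) :=
  forall v w : V, comm_br (f v) (f w) = (lam * Th v w)%:A.

(* (A, iota) is "the algebra generated by V with relations
   v w - w v = lam Theta(v,w)": iota is linear, satisfies the relations, and
   (A, iota) is universal among such data (free algebra modulo the relations). *)
Definition is_A_Theta (k : fieldType) (V : lmodType k) (lam : k)
    (Th : V -> V -> k) (A : algType k) (iota : {linear V -> A}) :=
  theta_rel lam Th iota /\
  forall (C : algType k) (f : {linear V -> C}),
    theta_rel lam Th f ->
    exists g : {lrmorphism A -> C},
      (forall v, g (iota v) = f v) /\
      (forall h : {lrmorphism A -> C}, (forall v, h (iota v) = f v) -> h =1 g).

(* The unit [e] of [V] gives the element [c := iota e] of [A_Theta], whose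
   commutator with every generator is the scalar [lam Theta(e, v)].  Since
   [ad c] is a derivation, the elements killed by some power of [ad c] form a
   subalgebra; it contains the generators, hence it is all of [A_Theta].
   Taking [w = e] in the defining identity gives [ad c (B v z) = -2 lam B v z],
   and a locally nilpotent map has no eigenvector for a nonzero eigenvalue. *)

From HB Require Import structures.
From mathcomp Require Import all_boot all_order all_algebra.
From Stdlib Require Import ClassicalEpsilon.
Set Implicit Arguments.
Unset Strict Implicit.
Unset Printing Implicit Defensive.

Import GRing.Theory.
Local Open Scope ring_scope.

Section GeneratedSubalgebra.
Variables (k : fieldType) (V : lmodType k) (lam : k) (Th : V -> V -> k).
Variables (A : algType k) (iota : {linear V -> A}).
Hypothesis hA : is_A_Theta lam Th iota.
Variable S : pred A.
Hypothesis S_subalg : subalg_closed S.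
Hypothesis iota_in_S : forall v, iota v \in S.

HB.instance Definition _ :=
  GRing.isSubalgClosed.Build k A S (GRing.subalg_closed_semi S_subalg).

Record subalg := Subalg { subalg_val : A; subalg_valP : subalg_val \in S }.
HB.instance Definition _ := [isSub for subalg_val].
HB.instance Definition _ := [Choice of subalg by <:].
HB.instance Definition _ := [SubChoice_isSubAlgebra of subalg by <:].

Definition iota_subalg (v : V) : subalg := Subalg (iota_in_S v).

Lemma iota_subalg_is_linear : linear iota_subalg.
Proof. by move=> a u v; apply: val_inj; rewrite /= linearP. Qed.
HB.instance Definition _ :=
  GRing.isLinear.Build k V subalg _ iota_subalg iota_subalg_is_linear.

Section ValComp.
Variable g : {lrmorphism A -> subalg}.
Definition val_comp : A -> A := (val \o g)%FUN.
HB.instance Definition _ := GRing.RMorphism.on val_comp.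
HB.instance Definition _ := GRing.Linear.on val_comp.
End ValComp.

(* By universality, [val \o g] and the identity are both the lifting of
   [iota] itself, so they coincide. *)
Lemma is_A_Theta_generated : forall a : A, a \in S.
Proof.
have rel_sub : theta_rel lam Th iota_subalg.
  move=> v w; apply: val_inj.
  by rewrite /comm_br rmorphB !rmorphM /=; exact: hA.1.
have [g [g_iota _]] := hA.2 _ _ rel_sub.
have [g0 [_ g0_uniq]] := hA.2 _ _ hA.1.
have id_g0 := g0_uniq idfun (fun v => erefl).
have val_g0 : val_comp g =1 g0.
  by apply: g0_uniq => v; change (val (g (iota v)) = iota v); rewrite g_iota.
by move=> a; rewrite -[a]/(idfun a) id_g0 -val_g0; exact: valP.
Qed.

End GeneratedSubalgebra.

Section AdNilpotent.
Variables (k : fieldType) (A : algType k) (c : A).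

Local Notation ad := (comm_br c).

Lemma ad_is_linear (a : k) (x y : A) : ad (a *: x + y) = a *: ad x + ad y.
Proof.
by rewrite /comm_br mulrDr mulrDl -scalerAl -scalerAr opprD addrACA scalerBr.
Qed.

Lemma ad_is_derivation (x y : A) : ad (x * y) = ad x * y + x * ad y.
Proof. by rewrite /comm_br mulrBl mulrBr !mulrA addrA subrK. Qed.

Lemma iter_ad0 n : iter n ad 0 = 0.
Proof. by elim: n => //= n ->; rewrite /comm_br mulr0 mul0r subrr. Qed.

Lemma iter_adP n (a : k) (x y : A) :
  iter n ad (a *: x + y) = a *: iter n ad x + iter n ad y.
Proof. by elim: n => //= n ->; rewrite ad_is_linear. Qed.

Lemma iter_adD n (x y : A) : iter n ad (x + y) = iter n ad x + iter n ad y.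
Proof. by rewrite -{1}[x]scale1r iter_adP scale1r. Qed.

Lemma iter_ad_eq0_le m n (x : A) :
  (m <= n)%N -> iter m ad x = 0 -> iter n ad x = 0.
Proof. by move=> /subnK <- hx; rewrite iterD hx iter_ad0. Qed.

Lemma iter_ad_mul_eq0 p q (x y : A) :
  iter p ad x = 0 -> iter q ad y = 0 -> iter (p + q) ad (x * y) = 0.
Proof.
elim: p q x y => [|p IHp] q x y hx; first by rewrite /= in hx; rewrite hx mul0r iter_ad0.
elim: q y => [|q IHq] y hy; first by rewrite /= in hy; rewrite hy mulr0 iter_ad0.
rewrite addnS iterSr ad_is_derivation iter_adD {1}addSnnS IHp ?IHq ?addr0 //.
- by rewrite -iterSr.
- by rewrite -iterSr.
Qed.

Definition ad_nilpotent (x : A) : bool :=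
  if excluded_middle_informative (exists n, iter n ad x = 0) then true else false.

Lemma ad_nilpotentP (x : A) : reflect (exists n, iter n ad x = 0) (ad_nilpotent x).
Proof. by rewrite /ad_nilpotent; case: excluded_middle_informative; constructor. Qed.

Lemma ad_nilpotent_subalg_closed : subalg_closed ad_nilpotent.
Proof.
split.
- by apply/ad_nilpotentP; exists 1%N; rewrite /= /comm_br mulr1 mul1r subrr.
- move=> a x y /ad_nilpotentP [m hm] /ad_nilpotentP [n hn].
  apply/ad_nilpotentP; exists (maxn m n).
  rewrite iter_adP (iter_ad_eq0_le (leq_maxl m n) hm).
  by rewrite (iter_ad_eq0_le (leq_maxr m n) hn) scaler0 addr0.
- move=> x y /ad_nilpotentP [m hm] /ad_nilpotentP [n hn].
  by apply/ad_nilpotentP; exists (m + n)%N; exact: iter_ad_mul_eq0.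
Qed.

Lemma ad_nilpotent_eigenvector_eq0 (mu : k) (x : A) :
  mu != 0 -> ad x = mu *: x -> ad_nilpotent x -> x = 0.
Proof.
move=> mu_neq0 adx /ad_nilpotentP [n].
have -> : iter n ad x = mu ^+ n *: x.
  elim: n => [|n IH] /=; first by rewrite scale1r.
  rewrite IH /comm_br -scalerAl -scalerAr -scalerBr -/(comm_br c x) adx.
  by rewrite scalerA exprS mulrC.
by move/eqP; rewrite scaler_eq0 expf_eq0 (negbTE mu_neq0) andbF => /eqP.
Qed.

End AdNilpotent.

Theorem mainTheorem12 (k : fieldType) (hk : 2%N \notin [pchar k])
  (lam : k) (hlam : lam != 0)
  (V : comAlgType k) (Th : V -> V -> k) (hTh : antisym_form Th)
  (A : algType k) (iota : {linear V -> A}) (hA : is_A_Theta lam Th iota)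
  (B : V -> V -> A) (hB : bilinear_map B)
  (hrel : forall v w z : V,
      B (v * w) z + B v (w * z) = lam^-1 *: comm_br (B v z) (iota w)) :
  forall v w : V, B v w = 0.
Proof.
pose c := iota 1.
have iota_nilpotent v : ad_nilpotent c (iota v).
  apply/ad_nilpotentP; exists 2%N => /=.
  have -> : comm_br c (iota v) = (lam * Th 1 v)%:A by exact: hA.1.
  by rewrite /comm_br mulr_algr mulr_algl subrr.
have all_nilpotent := is_A_Theta_generated hA (ad_nilpotent_subalg_closed c)
  iota_nilpotent.
move=> v z; apply: (@ad_nilpotent_eigenvector_eq0 _ _ c (- (lam *+ 2))).
- have two_neq0 : (2%:R : k) != 0 by move: hk; rewrite inE.
  by rewrite oppr_eq0 -mulr_natr mulf_neq0.
- have -> : comm_br c (B v z) = - comm_br (B v z) (iota 1) by rewrite /comm_br opprB.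
  have := hrel v 1 z; rewrite mulr1 mul1r => /(congr1 (fun x => lam *: x)).
  rewrite scalerA mulfV // scale1r => <-.
  by rewrite scaleNr mulr2n scalerDl scalerDr.
- exact: all_nilpotent.
Qed.
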